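(* Let $\omega\in S_n$ and $1\le i<j\le n$ with $c_i(\omega),c_j(\omega)>0$. If $m_{i,p}(\omega)>m_{j,q}(\omega)$ for some $p\in[c_i(\omega)]$ and $q\in[c_j(\omega)]$, then $c_j(\omega)\ge c_i(\omega)+q-p$.
   Context: Permutations $\omega\in S_n$ are written in one-line notation. Let ${\rm Inv}(\omega)=\{(i,j): 1\le i<j\le n,\ \omega(i)>\omega(j)\}$, $c_i(\omega)=\#\{j: i<j\le n,\ \omega(i)>\omega(j)\}$, and for $i<j$, $c_{i,j}(\omega)=\#\{k: i<k<j,\ \omega(i)>\omega(k)\}$; $[m]=\{1,\dots,m\}$. For $i$ with $c_i(\omega)>0$ and $x\in[c_i(\omega)]$, $m_{i,x}(\omega)\in\mathbb{N}^n$ has $j$-th coordinate $0$ if $j<i$; $x$ if $j=i$; $0$ if $j>i$ and $(i,j)\in{\rm Inv}(\omega)$; $\max\{0,x-c_{i,j}(\omega)\}$ if $j>i$ and $(i,j)\notin{\rm Inv}(\omega)$. Comparisons are strict comparisons in the product order on $\mathbb{N}^n$. *)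

(* Permutations of S_n are elements of 'S_n (perms of 'I_n);
   positions 1..n of the paper are the ordinals 0..n-1. *)
From mathcomp Require Import all_boot all_order all_fingroup.
Set Implicit Arguments. Unset Strict Implicit. Unset Printing Implicit Defensive.

Definition inv_pair n (w : 'S_n) (i j : 'I_n) : bool := (i < j) && (w j < w i).

Definition cnt n (w : 'S_n) (i : 'I_n) : nat := #|[pred j : 'I_n | inv_pair w i j]|.

Definition cnt2 n (w : 'S_n) (i j : 'I_n) : nat :=
  #|[pred k : 'I_n | (i < k) && (k < j) && (w k < w i)]|.

Definition mvec n (w : 'S_n) (i : 'I_n) (x : nat) (j : 'I_n) : nat :=
  if j < i then 0
  else if j == i then x
  else if inv_pair w i j then 0
  else x - cnt2 w i j.   (* truncated subtraction = max{0, x - c_{i,j}} *)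

Definition vle n (a b : 'I_n -> nat) : Prop := forall k, a k <= b k.
Definition vlt n (a b : 'I_n -> nat) : Prop := vle a b /\ exists k, a k <> b k.

From Pilot Require Import Defs.
From mathcomp Require Import all_boot all_order all_fingroup.
From mathcomp Require Import zify.

(* Only the j-th coordinate of the hypothesis
   m_{j,q}(w) < m_{i,p}(w) is needed.  That coordinate of m_{j,q}(w) is q >= 1,
   so the j-th coordinate of m_{i,p}(w) is positive: (i,j) is not an inversion,
   i.e. w(i) < w(j), and q <= p - c_{i,j}(w).  Independently, when w(i) < w(j)
   every inversion (i,k) either has k < j (counted by c_{i,j}) or k > j, in
   which case w(k) < w(i) < w(j) makes (j,k) an inversion; hence
   c_i <= c_{i,j} + c_j.  Adding the two inequalities gives c_i + q <= c_j + p. *)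

(* If w(i) < w(j) with i < j, the inversions starting at i split into those
   ending before j and inversions starting at j. *)
Lemma cnt_le_cnt2_add_cnt n (w : 'S_n) (i j : 'I_n) :
  i < j -> w i < w j -> cnt w i <= cnt2 w i j + cnt w j.
Proof.
move=> lt_ij lt_wij; rewrite /cnt /cnt2 -cardUI.
apply: leq_trans (leq_addr _ _); apply: subset_leq_card.
apply/subsetP => k; rewrite !inE /Defs.inv_pair => /andP[lt_ik lt_wki].
case: (ltngtP k j) => [lt_kj | lt_jk | /val_inj eq_kj].
- by rewrite lt_ik lt_wki.
- by apply/orP; right; apply/andP; split=> //; exact: ltn_trans lt_wki lt_wij.
- by move: lt_wki; rewrite eq_kj ltnNge ltnW.
Qed.

Lemma mvec_diag n (w : 'S_n) (i : 'I_n) (x : nat) : mvec w i x i = x.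
Proof. by rewrite /mvec ltnn eqxx. Qed.

(* For i < j, the j-th coordinate of m_{i,x}(w) vanishes on an inversion
   and is max{0, x - c_{i,j}(w)} otherwise.  ([Defs.inv_pair] is qualified
   because MathComp's monoid library also defines an [inv_pair].) *)
Lemma mvec_later n (w : 'S_n) (i j : 'I_n) (x : nat) : i < j ->
  mvec w i x j = if Defs.inv_pair w i j then 0 else x - cnt2 w i j.
Proof.
move=> lt_ij; have /negbTE j_neq_i : j != i by rewrite neq_ltn lt_ij orbT.
by rewrite /mvec ltnNge ltnW //= j_neq_i.
Qed.

Lemma mvec_later_pos n (w : 'S_n) (i j : 'I_n) (p q : nat) :
  i < j -> 0 < q <= mvec w i p j -> w i < w j /\ cnt2 w i j + q <= p.
Proof.
move=> lt_ij; rewrite mvec_later // /Defs.inv_pair lt_ij /=.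
case: (ltngtP (w i) (w j)) => [lt_wij | lt_wji | /val_inj/perm_inj eq_ij].
- by case/andP=> q_gt0 le_q; split=> //; lia.
- by case/andP; lia.
- by rewrite eq_ij ltnn in lt_ij.
Qed.

Theorem mainTheorem5 (n : nat) (w : 'S_n) (i j : 'I_n) (p q : nat) :
  i < j -> 0 < cnt w i -> 0 < cnt w j ->
  1 <= p <= cnt w i -> 1 <= q <= cnt w j ->
  vlt (mvec w j q) (mvec w i p) ->
  cnt w i + q <= cnt w j + p.
Proof.
move=> lt_ij _ _ _ /andP[q_gt0 _] [le_mvec _].
have pos_j : 0 < q <= mvec w i p j by rewrite q_gt0 -{1}(@mvec_diag n w j q) le_mvec.
have [lt_wij bound_q] := @mvec_later_pos n w i j p q lt_ij pos_j.
have split_cnt := @cnt_le_cnt2_add_cnt n w i j lt_ij lt_wij.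
apply: leq_trans (leq_add split_cnt (leqnn q)) _.
by rewrite addnAC addnC leq_add2l.
Qed.
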